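(* Let $R\subseteq S$, $\sigma$ be as in the context, and $n=n_1+\cdots+n_\ell$. Let $\mathbf{a}=(a_1,\ldots,a_\ell)\in(S^* )^\ell$ and $\beta_{i,j}\in S$ ($1\le i\le\ell$, $1\le j\le n_i$) satisfy: (i) $a_i-a_j^\beta\in S^*$ for all $\beta\in S^*$ and $1\le i<j\le\ell$; (ii) for each $i$, $\beta_{i,1},\ldots,\beta_{i,n_i}$ are $R$-linearly independent. Then the $n\times n$ matrix $M_n(\mathbf{a},\boldsymbol\beta)$ over $S$, whose rows are indexed by $s=0,1,\ldots,n-1$, whose columns are indexed by the pairs $(i,j)$ in the order $(1,1),\ldots,(1,n_1),\ldots,(\ell,1),\ldots,(\ell,n_\ell)$, and whose $(s,(i,j))$ entry is $\mathcal{D}_{a_i}^s(\beta_{i,j})$, is invertible.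
   Context: $R$ is a finite commutative chain ring with maximal ideal $\mathfrak{m}$, $q=|R/\mathfrak{m}|$; $S=R[x]/(h)$ with $h$ monic of degree $m$ irreducible modulo $\mathfrak{m}$, local with maximal ideal $\mathfrak{M}=\mathfrak{m}S$ and unit group $S^*=S\setminus\mathfrak{M}$. $\sigma$ is a ring automorphism of $S$ generating the Galois group of $R\subseteq S$, with fixed ring $R$, reducing modulo $\mathfrak{M}$ to $y\mapsto y^q$. For $a,\beta\in S$: $N_s(a)=\sigma^{s-1}(a)\cdots\sigma(a)a$ ($N_0(a)=1$) and $\mathcal{D}_a^s(\beta)=\sigma^s(\beta)N_s(a)$. For $\beta\in S^*$, $a^\beta=\sigma(\beta)a\beta^{-1}$. *)

From HB Require Import structures.
From mathcomp Require Import all_boot all_order all_algebra.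
Set Implicit Arguments. Unset Strict Implicit. Unset Printing Implicit Defensive.
Import Order.TTheory GRing.Theory Num.Theory.
Local Open Scope ring_scope.

Definition is_ideal (R : finComUnitRingType) (I : {set R}) : Prop :=
  [/\ 0 \in I, (forall x y, x \in I -> y \in I -> x + y \in I)
    & (forall r x, x \in I -> r * x \in I)].

Definition chain_ring (R : finComUnitRingType) : Prop :=
  forall I J : {set R}, is_ideal I -> is_ideal J -> I \subset J \/ J \subset I.

(* the maximal ideal m of the (local) chain ring: its non-units *)
Definition maxid (R : finComUnitRingType) : {set R} :=
  [set r : R | r \isn't a GRing.unit].

(* q = |R / m| *)
Definition resq (R : finComUnitRingType) : nat := (#|R| %/ #|maxid R|)%N.

(* a polynomial whose reduction mod m is a unit of (R/m)[x] *)
Definition unit_mod_m (R : finComUnitRingType) (f : {poly R}) : Prop :=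
  f`_0 \is a GRing.unit /\ (forall i, (0 < i)%N -> f`_i \in maxid R).

(* h is irreducible modulo m: its reduction is nonconstant and has only
   trivial factorizations in (R/m)[x] *)
Definition irreducible_mod_m (R : finComUnitRingType) (h : {poly R}) : Prop :=
  (1 < size h)%N /\
  forall f g : {poly R}, (forall i, (h - f * g)`_i \in maxid R) ->
    unit_mod_m f \/ unit_mod_m g.

Definition aeval (R : finComUnitRingType) (S : comUnitAlgType R)
  (xi : S) (p : {poly R}) : S := (map_poly (GRing.in_alg S) p).[xi].

(* S = R[x]/(h) as an R-algebra, with x mapped to xi *)
Definition presents (R : finComUnitRingType) (S : comUnitAlgType R)
  (h : {poly R}) (xi : S) : Prop :=
  (forall y : S, exists p : {poly R}, y = aeval xi p) /\
  (forall p : {poly R}, aeval xi p = 0 <-> exists g : {poly R}, p = g * h).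

Definition R_aut (R : finComUnitRingType) (S : comUnitAlgType R)
  (tau : {rmorphism S -> S}) : Prop :=
  bijective tau /\ forall r : R, tau (r%:A) = r%:A.

(* sigma generates the Galois group, has fixed ring R, and reduces
   modulo M = mS (= the non-units of the local ring S) to y |-> y^q *)
Definition galois_generator (R : finComUnitRingType) (S : comUnitAlgType R)
  (sigma : {rmorphism S -> S}) : Prop :=
  [/\ R_aut sigma,
      (forall tau : {rmorphism S -> S}, R_aut tau ->
         exists k : nat, forall y, tau y = iter k sigma y),
      (forall y : S, sigma y = y -> exists r : R, y = r%:A)
    & (forall y : S, (sigma y - y ^+ resq R) \isn't a GRing.unit)].

Definition Nsig (R : finComUnitRingType) (S : comUnitAlgType R)
  (sigma : {rmorphism S -> S}) (s : nat) (a : S) : S :=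
  \prod_(k < s) iter k sigma a.

Definition Dop (R : finComUnitRingType) (S : comUnitAlgType R)
  (sigma : {rmorphism S -> S}) (a : S) (s : nat) (beta : S) : S :=
  iter s sigma beta * Nsig sigma s a.

Definition sconj (R : finComUnitRingType) (S : comUnitAlgType R)
  (sigma : {rmorphism S -> S}) (a beta : S) : S :=
  sigma beta * a * beta^-1.

Definition Mmat (R : finComUnitRingType) (S : comUnitAlgType R)
  (sigma : {rmorphism S -> S}) (l : nat) (n : 'I_l -> nat)
  (a : 'I_l -> S) (beta : forall i : 'I_l, 'I_(n i) -> S)
  : 'M[S]_(\sum_(i < l) n i, \sum_(i < l) n i) :=
  mxrow (fun i : 'I_l =>
    \matrix_(s < \sum_(i0 < l) n i0, j < n i) Dop sigma (a i) s (beta i j)).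

(* Put b := a_1^(beta_11).  Subtracting sigma^(s-1)(b) times row s-1 from row s
   turns the column D^s_(a_i)(beta) (s >= 1) into D^(s-1)_(a_i)(sigma(beta) a_i - b beta)
   and kills the first column below its top entry beta_11, so
   det M = beta_11 * det M' with M' of the same shape for the n-1 columns
   sigma(beta_ij) a_i - b beta_ij, (i,j) <> (1,1).  These are again R-free block by
   block: on the R-span of block i the map y |-> sigma(y) a_i - b y is injective
   for i <> 1 by hypothesis (i), and for i = 1 its kernel is R beta_11 because the
   fixed ring of sigma is R.  Both facts, as well as beta_11 being a unit, rest on
   the factorisation y = r u, with r in R and u a unit, of every y in S: write
   y = p(xi) with deg p < deg h and p = r q, where r generates the ideal of the
   coefficients of p (R is a chain ring), so that q has a unit coefficient; as h is
   irreducible modulo m, U q + V h = 1 + E with E in m[x], and E(xi) is nilpotent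
   because m is, so q(xi) is a unit. *)

From HB Require Import structures.
From mathcomp Require Import all_boot all_order all_algebra.
From mathcomp Require Import ring.
Import GRing.Theory.
Set Implicit Arguments. Unset Strict Implicit. Unset Printing Implicit Defensive.
Local Open Scope ring_scope.

Lemma unitr1D_nilpotent (R : comUnitRingType) (e : R) k :
  e ^+ k = 0 -> 1 + e \is a GRing.unit.
Proof.
move=> ek0; apply/unitrPr; exists (\sum_(i < k) (- e) ^+ i).
have := subrX1 (- e) k; rewrite exprNn ek0 mulr0 sub0r => geom.
by apply: oppr_inj; rewrite -mulNr opprD addrC -geom.
Qed.

Lemma nonunit_zero_divisor (R : finComUnitRingType) (r : R) :
  r \isn't a GRing.unit -> exists2 c : R, c != 0 & c * r = 0.
Proof.
move=> r_nonunit; case: (pickP (fun c : R => (c != 0) && (c * r == 0))).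
  by move=> c /andP[c0 /eqP cr0]; exists c.
move=> no_zdiv; have mulr_inj : injective (fun c : R => c * r).
  move=> c1 c2 /= eq_c; apply/eqP; rewrite -subr_eq0; apply: contraT => ne.
  by have := no_zdiv (c1 - c2); rewrite ne mulrBl eq_c subrr eqxx.
have [g _ gK] := injF_bij mulr_inj.
have /unitrPr r_unit : exists y, r * y = 1 by exists (g 1); rewrite mulrC gK.
by rewrite r_unit in r_nonunit.
Qed.

Lemma irredp_coprimep_small (F : fieldType) (p q : {poly F}) :
  irreducible_poly p -> q != 0 -> (size q < size p)%N -> coprimep q p.
Proof.
move=> p_irr q0 size_qp; have [|gcd_p] := irredp_XsubCP p_irr (dvdp_gcdr q p).
  by rewrite gcdp_eqp1.
have := dvdp_leq q0 (dvdp_gcdl q p); rewrite (eqp_size gcd_p) => size_pq.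
by have := leq_trans size_qp size_pq; rewrite ltnn.
Qed.

Section ChainRing.
Variables (R : finComUnitRingType) (chR : chain_ring R).

Definition principal_ideal (x : R) : {set R} := [set t * x | t : R].

Lemma principal_idealP x y :
  reflect (exists t, y = t * x) (y \in principal_ideal x).
Proof. by apply: (iffP imsetP) => [[t _ ->]|[t ->]]; exists t. Qed.

Lemma principal_ideal_is_ideal x : is_ideal (principal_ideal x).
Proof.
split=> [|_ _ /principal_idealP[t ->] /principal_idealP[u ->]|r _ /principal_idealP[t ->]];
  apply/principal_idealP.
- by exists 0; rewrite mul0r.
- by exists (t + u); rewrite mulrDl.
- by exists (r * t); rewrite mulrA.
Qed.

Lemma chain_dvd_total (x y : R) : (exists t, x = t * y) \/ (exists t, y = t * x).
Proof.
have self z : z \in principal_ideal z by apply/principal_idealP; exists 1; rewrite mul1r.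
case: (chR (principal_ideal_is_ideal x) (principal_ideal_is_ideal y)) => /subsetP sub.
- by left; apply/principal_idealP/sub/self.
- by right; apply/principal_idealP/sub/self.
Qed.

Lemma maxidE x : (x \in maxid R) = (x \isn't a GRing.unit).
Proof. by rewrite inE. Qed.

Lemma maxidD x y : x \in maxid R -> y \in maxid R -> x + y \in maxid R.
Proof.
rewrite !maxidE; case: (chain_dvd_total x y) => [[t ->]|[t ->]] ux uy.
- by rewrite -{2}[y]mul1r -mulrDl unitrM negb_and uy orbT.
- by rewrite -{1}[x]mul1r -mulrDl unitrM negb_and ux orbT.
Qed.

(* [{ideal_quot _}] is keyed on a [{pred R}], which the [{set R}] [maxid R] is not. *)
Definition maxid_pred : {pred R} := fun x => x \in maxid R.

Lemma maxid_idealr : idealr_closed maxid_pred.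
Proof.
have memE x : (x \in maxid_pred) = (x \in maxid R) by [].
split=> [||r u v]; rewrite !memE; first by rewrite maxidE unitr0.
  by rewrite maxidE unitr1.
move=> uI vI; apply: maxidD vI.
by move: uI; rewrite !maxidE unitrM negb_and => ->; rewrite orbT.
Qed.

HB.instance Definition _ := isIdealr.Build R maxid_pred maxid_idealr.

Lemma unitr1B_maxid y : y \in maxid R -> 1 - y \is a GRing.unit.
Proof.
move=> yI; apply: contraT => nu; have := maxidD (x := 1 - y) (y := y).
by rewrite subrK [1 \in _]maxidE unitr1 maxidE => /(_ nu yI).
Qed.

Lemma maxid_nilpotent y : y \in maxid R -> exists k, y ^+ k = 0.
Proof.
move=> yI; pose pow (i : 'I_#|R|.+1) := y ^+ i.
have /injectivePn[i [j ne_ij eq_ij]] : ~~ injectiveb pow.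
  by apply/negP => /injectiveP /leq_card; rewrite card_ord ltnn.
wlog lt_ij : i j ne_ij eq_ij / (i < j)%N.
  move=> wlog; case: (ltngtP i j) => [|lt_ji|/val_inj eq]; first exact: wlog.
    by apply: (wlog j i); rewrite // eq_sym.
  by rewrite eq eqxx in ne_ij.
exists i; have : y ^+ i * (1 - y ^+ (j - i)) = 0.
  by rewrite mulrBr mulr1 -exprD subnKC ?(ltnW lt_ij) // (eq_ij : y ^+ i = y ^+ j) subrr.
move/(congr1 (fun z => z * (1 - y ^+ (j - i))^-1)).
rewrite mul0r -mulrA mulrV ?mulr1 // unitr1B_maxid // maxidE unitrX_pos ?subn_gt0 //.
by rewrite -maxidE.
Qed.

Lemma seq_common_divisor (s : seq R) :
  exists c, (s != [::] -> c \in s) /\ forall x, x \in s -> exists t, x = t * c.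
Proof.
elim: s => [|x s [c [cs dvd_c]]]; first by exists 0.
have [->|/cs cs'] := eqVneq s [::].
  by exists x; split=> [|y]; rewrite ?mem_head // inE => /eqP ->; exists 1; rewrite mul1r.
case: (chain_dvd_total x c) => [[t ext]|[t ecx]].
  exists c; split=> [|y]; first by rewrite inE cs' orbT.
  by rewrite inE => /orP[/eqP ->|/dvd_c //]; exists t.
exists x; split=> [|y]; first by rewrite mem_head.
rewrite inE => /orP[/eqP ->|/dvd_c [u ->]]; first by exists 1; rewrite mul1r.
by exists (u * t); rewrite ecx mulrA.
Qed.

Lemma poly_content (P : {poly R}) : exists c (Q : {poly R}),
  [/\ P = c *: Q, (size Q <= size P)%N & P != 0 -> exists k, Q`_k = 1].
Proof.
have [c [cP dvd_c]] := seq_common_divisor P.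
pose t i := if P`_i == c then 1 else odflt 0 [pick t | P`_i == t * c].
exists c, (\poly_(i < size P) t i); split; first 1 last.
- exact: size_poly.
- rewrite -size_poly_eq0 size_eq0 => /cP cP'; exists (index c P).
  by rewrite coef_poly index_mem cP' /t nth_index ?eqxx.
apply/polyP => i; rewrite coefZ coef_poly; case: ltnP => [ltiP|?]; last first.
  by rewrite mulr0 nth_default.
rewrite /t; case: eqP => [->|_]; first by rewrite mulr1.
case: pickP => [u /eqP ->|none]; first by rewrite mulrC.
by have [u eu] := dvd_c _ (mem_nth 0 ltiP); have := none u; rewrite eu eqxx.
Qed.

Local Open Scope quotient_scope.

Definition residue_field := {ideal_quot maxid_pred}.
HB.instance Definition _ := GRing.ComNzRing.on residue_field.

Definition resm : {rmorphism R -> residue_field} := \pi.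

Lemma resm_eq0 x : (resm x == 0) = (x \in maxid R).
Proof.
have -> : (0 : residue_field) = \pi 0 by rewrite rmorph0.
by rewrite -Quotient.idealrBE subr0.
Qed.

Lemma resmK (x : residue_field) : resm (repr x) = x.
Proof. exact: reprK. Qed.

Definition residue_inv (x : residue_field) := resm (repr x)^-1.

Lemma residue_mulVf (x : residue_field) : x != 0 -> residue_inv x * x = 1.
Proof.
rewrite -{1 3}(resmK x) resm_eq0 maxidE negbK => ux.
by rewrite /residue_inv -rmorphM mulVr ?rmorph1.
Qed.

Lemma residue_inv0 : residue_inv 0 = 0.
Proof.
rewrite /residue_inv invr_out ?resmK //.
by rewrite -maxidE -resm_eq0 resmK.
Qed.

HB.instance Definition _ :=
  GRing.ComNzRing_isField.Build residue_field residue_mulVf residue_inv0.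

End ChainRing.

Section ReductionModMaxid.
Variables (R : finComUnitRingType) (chR : chain_ring R).
Local Notation k := (residue_field chR).
Local Notation red := (map_poly (resm chR)).

Definition liftp (F : {poly k}) : {poly R} := \poly_(i < size F) repr F`_i.

Lemma liftpK F : red (liftp F) = F.
Proof.
apply/polyP => i; rewrite coef_map coef_poly.
case: (ltnP i (size F)) => [_|le_F_i]; first exact: resmK.
by rewrite nth_default //; apply: rmorph0.
Qed.

Lemma red_eq0_coef (P : {poly R}) : red P = 0 -> forall i, P`_i \in maxid R.
Proof. by move=> P0 i; rewrite -resm_eq0 -coef_map P0 coef0. Qed.

Lemma size_red_unit_mod_m (P : {poly R}) : unit_mod_m P -> size (red P) = 1%N.
Proof.
case=> P0_unit Pi_maxid; have -> : red P = (resm chR P`_0)%:P.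
  apply/polyP => -[|i]; rewrite coef_map coefC //=.
  by apply/eqP; rewrite resm_eq0 Pi_maxid.
by rewrite size_polyC resm_eq0 maxidE P0_unit.
Qed.

Lemma size_red_monic (h : {poly R}) : h \is monic -> size (red h) = size h.
Proof. by move=> h_monic; rewrite size_map_poly_id0 // (monicP h_monic) rmorph1 oner_neq0. Qed.

Lemma irredp_red (h : {poly R}) :
  h \is monic -> irreducible_mod_m h -> irreducible_poly (red h).
Proof.
move=> h_monic [size_h h_irr].
split=> [|d size_d d_dvd]; first by rewrite size_red_monic.
have red_h_eq : red h %/ d * d = red h := divpK d_dvd.
have [||] := h_irr (liftp (red h %/ d)) (liftp d).
- by apply: red_eq0_coef; rewrite rmorphB rmorphM /= !liftpK red_h_eq subrr.
- move/size_red_unit_mod_m; rewrite liftpK => /eqP/size_poly1P[c c0 quo_c].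
  by rewrite -dvdp_size_eqp // -red_h_eq quo_c mul_polyC size_scale.
- by move/size_red_unit_mod_m; rewrite liftpK => size_d1; rewrite size_d1 in size_d.
Qed.

Lemma bezout_mod_maxid (h q : {poly R}) i :
  h \is monic -> irreducible_mod_m h -> q`_i \is a GRing.unit ->
  (size q < size h)%N ->
  exists U V : {poly R}, forall j, (U * q + V * h - 1)`_j \in maxid R.
Proof.
move=> h_monic h_irr qi_unit size_qh.
have red_q0 : red q != 0.
  by apply: contraL qi_unit => /eqP/red_eq0_coef/(_ i); rewrite maxidE.
have : coprimep (red q) (red h).
  apply: irredp_coprimep_small (irredp_red h_monic h_irr) red_q0 _.
  by rewrite (size_red_monic h_monic); exact: leq_ltn_trans (size_poly _ _) size_qh.
case/Bezout_eq1_coprimepP => -[u v] uv1.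
exists (liftp u), (liftp v); apply: red_eq0_coef.
by rewrite !rmorphB !rmorphD !rmorphM /= !liftpK uv1 rmorph1 subrr.
Qed.

End ReductionModMaxid.

Section Presentation.
Variables (R : finComUnitRingType) (S : comUnitAlgType R).
Variables (h : {poly R}) (xi : S).
Hypotheses (chR : chain_ring R) (h_monic : h \is monic).
Hypotheses (h_irr : irreducible_mod_m h) (h_pres : presents h xi).
Local Notation ev := (horner_alg xi).

Lemma aevalE p : aeval xi p = ev p.
Proof. by []. Qed.

Lemma horner_alg_h_eq0 : ev h = 0.
Proof. by apply/(h_pres.2 h).2; exists 1; rewrite mul1r. Qed.

Lemma horner_alg_small_rep (y : S) : exists p : {poly R}, (size p < size h)%N /\ y = ev p.
Proof.
have [p ->] := h_pres.1 y; rewrite aevalE; exists (Pdiv.Ring.rmodp p h); split.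
  by rewrite Pdiv.Ring.ltn_rmodpN0 // monic_neq0.
by rewrite {1}(Pdiv.RingMonic.rdivp_eq h_monic p) rmorphD rmorphM /= horner_alg_h_eq0 mulr0 add0r.
Qed.

Lemma horner_alg_maxid_nilpotent (E : {poly R}) :
  (forall i, E`_i \in maxid R) -> exists k, ev E ^+ k = 0.
Proof.
move=> E_maxid; have [->|E0] := eqVneq E 0; first by exists 1%N; rewrite rmorph0 expr1.
have [c [Q [eE _ /(_ E0)[i Qi1]]]] := poly_content chR E.
have [k ck0] : exists k, c ^+ k = 0.
  by apply: (maxid_nilpotent chR); have := E_maxid i; rewrite eE coefZ Qi1 mulr1.
by exists k; rewrite eE linearZ /= mulr_algl exprZn ck0 scale0r.
Qed.

Lemma horner_alg_unit (q : {poly R}) i :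
  q`_i \is a GRing.unit -> (size q < size h)%N -> ev q \is a GRing.unit.
Proof.
move=> qi_unit size_qh.
have [U [V E_maxid]] := bezout_mod_maxid chR (q := q) h_monic h_irr qi_unit size_qh.
have [k Ek0] := horner_alg_maxid_nilpotent E_maxid.
have := unitr1D_nilpotent Ek0.
by rewrite !rmorphB rmorphD !rmorphM rmorph1 /= horner_alg_h_eq0 mulr0 addr0 addrC subrK unitrM => /andP[].
Qed.

Lemma scale_unit_factorization (y : S) :
  exists (r : R) (u : S), u \is a GRing.unit /\ y = r *: u.
Proof.
have [p [size_ph ->]] := horner_alg_small_rep y.
have [->|p0] := eqVneq p 0; first by exists 0, 1; rewrite unitr1 rmorph0 scale0r.
have [c [Q [ep size_Qp /(_ p0)[i Qi1]]]] := poly_content chR p.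
rewrite ep; exists c, (ev Q); rewrite linearZ /= mulr_algl; split=> //.
by apply: (horner_alg_unit (i := i)); rewrite ?Qi1 ?unitr1 // (leq_ltn_trans size_Qp).
Qed.

End Presentation.

Section TwistedOperators.
Variables (R : finComUnitRingType) (S : comUnitAlgType R) (sigma : {rmorphism S -> S}).

Lemma iter_rmorph0 s : iter s sigma 0 = 0.
Proof. by elim: s => //= s ->; rewrite rmorph0. Qed.

Lemma iter_rmorphB s (x y : S) :
  iter s sigma (x - y) = iter s sigma x - iter s sigma y.
Proof. by elim: s => //= s ->; rewrite rmorphB. Qed.

Lemma iter_rmorphM s (x y : S) :
  iter s sigma (x * y) = iter s sigma x * iter s sigma y.
Proof. by elim: s => //= s ->; rewrite rmorphM. Qed.

Lemma Dop0 a y : Dop sigma a 0 y = y.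
Proof. by rewrite /Dop /Nsig big_ord0 mulr1. Qed.

Lemma Dop_y0 a s : Dop sigma a s 0 = 0.
Proof. by rewrite /Dop iter_rmorph0 mul0r. Qed.

Lemma Dop_shift a b s y :
  Dop sigma a s.+1 y - iter s sigma b * Dop sigma a s y =
  Dop sigma a s (sigma y * a - b * y).
Proof.
rewrite /Dop /Nsig big_ord_recr /= iter_rmorphB !iter_rmorphM -iterSr /=.
by ring.
Qed.

Lemma sconj_div (a b u : S) : b \is a GRing.unit -> u \is a GRing.unit ->
  sigma u * sconj sigma a (b / u) = sconj sigma a b * u.
Proof.
move=> b_unit u_unit; have su_unit : sigma u \is a GRing.unit by rewrite rmorph_unit.
rewrite /sconj rmorphM rmorphV // invrM ?unitrV // invrK.
by rewrite mulrCA !mulrA -(mulrA _ _ a) [_^-1 * a]mulrC mulrA divrK // mulrAC.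
Qed.

Lemma unit_subr_sconjC (a a' u : S) : u \is a GRing.unit ->
  (a - sconj sigma a' u \is a GRing.unit) =
  (a' - sconj sigma a u^-1 \is a GRing.unit).
Proof.
move=> u_unit; have su_unit : sigma u \is a GRing.unit by rewrite rmorph_unit.
have -> : a - sconj sigma a' u = - (sigma u * (a' - sconj sigma a u^-1) * u^-1).
  rewrite /sconj rmorphV // invrK mulrBr mulrBl !mulrA mulrV // mul1r.
  by rewrite -[_ * u * _]mulrA mulrV // mulr1 opprB.
by rewrite unitrN !unitrM su_unit unitrV u_unit andbT.
Qed.

End TwistedOperators.

Section TwistedEquation.
Variables (R : finComUnitRingType) (S : comUnitAlgType R) (sigma : {rmorphism S -> S}).
Hypothesis sigma_fixR : forall r : R, sigma r%:A = r%:A.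
Hypothesis sigma_fixed : forall y : S, sigma y = y -> exists r : R, y = r%:A.
Hypothesis factorS : forall y : S, exists (r : R) (u : S), u \is a GRing.unit /\ y = r *: u.

Lemma sigmaZ (r : R) (y : S) : sigma (r *: y) = r *: sigma y.
Proof. by rewrite -mulr_algl rmorphM sigma_fixR mulr_algl. Qed.

Lemma torsionfree_unit (b : S) : (forall r : R, r *: b = 0 -> r = 0) -> b \is a GRing.unit.
Proof.
have [r [u [u_unit ->]]] := factorS b => torsionfree.
have [r_unit|r_nonunit] := boolP (r \is a GRing.unit).
  by rewrite -mulr_algl unitrM u_unit andbT -in_algE rmorph_unit.
have [c c0 cr0] := nonunit_zero_divisor r_nonunit.
by have := torsionfree c; rewrite scalerA cr0 scale0r => /(_ erefl) c_eq0; rewrite c_eq0 eqxx in c0.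
Qed.

Lemma twisted_eq_self (a b y : S) : a \is a GRing.unit -> b \is a GRing.unit ->
  sigma y * a = sconj sigma a b * y -> exists r : R, y = r *: b.
Proof.
move=> a_unit b_unit eq_y; have sb_unit : sigma b \is a GRing.unit by rewrite rmorph_unit.
have /sigma_fixed[r yb_r] : sigma (y / b) = y / b.
  rewrite rmorphM rmorphV //; apply: (mulIr a_unit); apply: (mulIr sb_unit).
  by rewrite mulrAC divrK // eq_y /sconj; ring.
by exists r; rewrite -mulr_algl -yb_r divrK.
Qed.

Lemma twisted_eq_other (a a' b y : S) : b \is a GRing.unit ->
  (forall u, u \is a GRing.unit -> a' - sconj sigma a u \is a GRing.unit) ->
  sigma y * a' = sconj sigma a b * y -> y = 0.
Proof.
move=> b_unit a'_sep eq_y; have [r [u [u_unit ey]]] := factorS y.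
have su_unit : sigma u \is a GRing.unit by rewrite rmorph_unit.
set w := sigma u * (a' - sconj sigma a (b / u)).
have w_unit : w \is a GRing.unit.
  by rewrite unitrM su_unit a'_sep // unitrM b_unit unitrV.
have rw0 : r *: w = 0.
  rewrite /w mulrBr sconj_div // scalerBr [r *: (sigma u * a')]scalerAl -sigmaZ.
  by rewrite -ey eq_y ey scalerAr subrr.
have r1_0 : r *: (1 : S) = 0 by rewrite -(mulrV w_unit) scalerAl rw0 mul0r.
by rewrite ey -[u]mul1r scalerAl r1_0 mul0r.
Qed.

End TwistedEquation.

Definition blockwise_free (R : pzRingType) (V : lmodType R) (l N : nat)
    (g : 'I_N -> 'I_l) (bt : 'I_N -> V) : Prop :=
  forall (i : 'I_l) (c : 'I_N -> R), (forall k, g k != i -> c k = 0) ->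
    \sum_k c k *: bt k = 0 -> forall k, c k = 0.

Lemma blockwise_free_flatten (R : pzRingType) (V : lmodType R) (l : nat)
    (n : 'I_l -> nat) (beta : forall i : 'I_l, 'I_(n i) -> V) :
  (forall (i : 'I_l) (c : 'I_(n i) -> R),
     \sum_(j < n i) c j *: beta i j = 0 -> forall j, c j = 0) ->
  blockwise_free (fun k : 'I_(\sum_(i < l) n i) => tagnat.sig1 k)
                 (fun k => beta (tagnat.sig1 k) (tagnat.sig2 k)).
Proof.
move=> beta_free i c c_supp sum_c0.
pose c_at (i' : 'I_l) (j : 'I_(n i')) := c (tagnat.rank (Tagged (fun i => 'I_(n i)) j)).
have c_at0 : forall j, c_at i j = 0.
  apply: beta_free; rewrite -[RHS]sum_c0 (reindex _ tagnat.rank_bij_on) /=.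
  transitivity (\sum_(i' < l) \sum_(j < n i') c_at i' j *: beta i' j).
    rewrite (bigD1 i) //= [X in _ + X]big1 ?addr0 // => i' ne_i'i; apply: big1 => j _.
    by rewrite /c_at c_supp ?scale0r // /tagnat.sig1 tagnat.rankK.
  rewrite sig_big_dep; apply: eq_bigr => -[i' j] _.
  by rewrite /tagnat.sig1 /tagnat.sig2 tagnat.rankK.
move=> k; rewrite -(tagnat.sigK k); case: (tagnat.sig k) => i' j.
have [eq_i'i|ne_i'i] := eqVneq i' i; first by move: j; rewrite eq_i'i; exact: c_at0.
by apply: c_supp; rewrite /tagnat.sig1 tagnat.rankK.
Qed.

Section DeterminantRecursion.
Variables (R : finComUnitRingType) (S : comUnitAlgType R) (sigma : {rmorphism S -> S}).
Hypothesis sigma_fixR : forall r : R, sigma r%:A = r%:A.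
Hypothesis sigma_fixed : forall y : S, sigma y = y -> exists r : R, y = r%:A.
Hypothesis factorS : forall y : S, exists (r : R) (u : S), u \is a GRing.unit /\ y = r *: u.
Variables (l : nat) (a : 'I_l -> S).
Hypothesis a_unit : forall i, a i \is a GRing.unit.
Hypothesis a_sep : forall i j : 'I_l, i != j ->
  forall u, u \is a GRing.unit -> a i - sconj sigma (a j) u \is a GRing.unit.

Definition Dmat N (g : 'I_N -> 'I_l) (bt : 'I_N -> S) : 'M[S]_N :=
  \matrix_(s < N, k < N) Dop sigma (a (g k)) s (bt k).

Lemma blockwise_free_unit N (g : 'I_N -> 'I_l) (bt : 'I_N -> S) :
  blockwise_free g bt -> forall k, bt k \is a GRing.unit.
Proof.
move=> bt_free k; apply: (torsionfree_unit factorS) => r rbt0.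
have := bt_free (g k) (fun k' => if k' == k then r else 0) _ _ k; rewrite eqxx; apply.
  by move=> k'; case: (k' =P k) => [->|]; rewrite ?eqxx.
by rewrite (bigD1 k) //= eqxx rbt0 big1 ?addr0 // => k' /negbTE ->; rewrite scale0r.
Qed.

Section Step.
Variables (N : nat) (g : 'I_N.+1 -> 'I_l) (bt : 'I_N.+1 -> S).
Hypothesis bt_free : blockwise_free g bt.
Let b := sconj sigma (a (g ord0)) (bt ord0).
Let g' k := g (lift ord0 k).
Let bt' k := sigma (bt (lift ord0 k)) * a (g' k) - b * bt (lift ord0 k).

Lemma blockwise_free_step : blockwise_free g' bt'.
Proof.
have bt0_unit := blockwise_free_unit bt_free ord0.
move=> i c' c'_supp sum_c'0; set y := \sum_k c' k *: bt (lift ord0 k).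
have eq_y : sigma y * a i = b * y.
  apply/eqP; rewrite -subr_eq0 -sum_c'0 /y rmorph_sum mulr_suml mulr_sumr -sumrB.
  apply/eqP/eq_bigr => k _; have [<-|ne] := eqVneq (g' k) i.
    by rewrite sigmaZ // /bt' scalerBr scalerAl scalerAr.
  by rewrite c'_supp // !scale0r rmorph0 mul0r mulr0 subrr.
have [r [ey r_supp]] : exists r : R, y = r *: bt ord0 /\ (g ord0 != i -> r = 0).
  have [e|ne] := eqVneq (g ord0) i.
    rewrite -e in eq_y; have [r ->] := twisted_eq_self sigma_fixed (a_unit _) bt0_unit eq_y.
    by exists r; split.
  exists 0; split=> //; rewrite scale0r.
  apply: (twisted_eq_other sigma_fixR factorS bt0_unit _ eq_y) => u u_unit.
  by apply: a_sep => //; rewrite eq_sym.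
pose c k := if unlift ord0 k is Some k' then c' k' else - r.
have c0 : forall k, c k = 0.
  apply: (bt_free (i := i)).
    move=> k; rewrite /c; case: unliftP => [k' -> | ->] gk; first exact: c'_supp.
    by rewrite r_supp ?oppr0.
  rewrite big_ord_recl /c unlift_none.
  under eq_bigr => k _ do rewrite liftK.
  by rewrite -/y ey scaleNr addNr.
by move=> k; have := c0 (lift ord0 k); rewrite /c liftK.
Qed.

Lemma unitmx_step : Dmat g' bt' \in unitmx -> Dmat g bt \in unitmx.
Proof.
move=> A'_unit; set A := Dmat g bt.
have bt0_unit := blockwise_free_unit bt_free ord0.
pose D : 'M[S]_N.+1 := \matrix_(s, t) ((s == t.+1 :> nat)%:R * iter t sigma b).
(* [P] is unitriangular, but we only need that [det P * det A] is a unit. *)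
pose P := 1%:M - D.
have PA_row0 k : (P *m A) ord0 k = A ord0 k.
  by rewrite mulmxBl mul1mx !mxE big1 ?subr0 // => t _; rewrite !mxE !mul0r.
have PA_lift s k : (P *m A) (lift ord0 s) k =
    Dop sigma (a (g k)) s (sigma (bt k) * a (g k) - b * bt k).
  rewrite -Dop_shift mulmxBl mul1mx !mxE (bigD1 (widen_ord (leqnSn N) s)) //.
  rewrite big1 => [|t ne_ts]; last first.
    rewrite !mxE lift0 eqSS (_ : (s == t :> nat) = false) ?mul0r //.
    by apply: contraNF ne_ts => /eqP st; apply/eqP/val_inj.
  by rewrite /= addr0 !mxE lift0 eqxx mul1r.
have PA_col0 s : (P *m A) (lift ord0 s) ord0 = 0.
  by rewrite PA_lift /b /sconj divrK // subrr Dop_y0.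
have minor : row' ord0 (col' ord0 (P *m A)) = Dmat g' bt'.
  by apply/matrixP => s k; rewrite [LHS]mxE [LHS]mxE PA_lift mxE.
have det_PA : \det (P *m A) = bt ord0 * \det (Dmat g' bt').
  rewrite (expand_det_col _ ord0) big_ord_recl big1 => [|s _]; last by rewrite PA_col0 mul0r.
  by rewrite addr0 PA_row0 /cofactor minor /A mxE Dop0 expr0 mul1r.
have : \det P * \det A \is a GRing.unit.
  by rewrite -det_mulmx det_PA unitrM bt0_unit -unitmxE.
by rewrite unitrM unitmxE => /andP[].
Qed.

End Step.

Lemma unitmx_Dmat N (g : 'I_N -> 'I_l) (bt : 'I_N -> S) :
  blockwise_free g bt -> Dmat g bt \in unitmx.
Proof.
elim: N g bt => [|N IH] g bt bt_free; first by rewrite unitmxE det_mx00 unitr1.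
exact/(unitmx_step bt_free)/IH/blockwise_free_step.
Qed.

End DeterminantRecursion.

Theorem theorem3 (R : finComUnitRingType) (S : comUnitAlgType R)
  (h : {poly R}) (xi : S) (sigma : {rmorphism S -> S})
  (l : nat) (n : 'I_l -> nat)
  (a : 'I_l -> S) (beta : forall i : 'I_l, 'I_(n i) -> S) :
  chain_ring R ->
  h \is monic ->
  irreducible_mod_m h ->
  presents h xi ->
  galois_generator sigma ->
  (forall i, a i \is a GRing.unit) ->
  (forall (b : S) (i j : 'I_l), b \is a GRing.unit -> (i < j)%N ->
     a i - sconj sigma (a j) b \is a GRing.unit) ->
  (forall (i : 'I_l) (c : 'I_(n i) -> R),
     \sum_(j < n i) c j *: beta i j = 0 -> forall j, c j = 0) ->
  Mmat sigma a beta \in unitmx.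
Proof.
move=> chR h_monic h_irr h_pres [[_ sigma_fixR] _ sigma_fixed _] a_unit a_sep_lt beta_free.
have factorS := scale_unit_factorization chR h_monic h_irr h_pres.
have a_sep (i j : 'I_l) : i != j ->
    forall u, u \is a GRing.unit -> a i - sconj sigma (a j) u \is a GRing.unit.
  move=> ne_ij u u_unit; case: (ltngtP i j) => [lt_ij|lt_ji|/val_inj eq_ij].
  - exact: a_sep_lt.
  - by rewrite unit_subr_sconjC // a_sep_lt ?unitrV.
  - by rewrite eq_ij eqxx in ne_ij.
have -> : Mmat sigma a beta =
    Dmat sigma a (fun k => tagnat.sig1 k) (fun k => beta (tagnat.sig1 k) (tagnat.sig2 k)).
  by apply/matrixP => s k; rewrite !mxE.
exact: (unitmx_Dmat sigma_fixR sigma_fixed factorS a_unit a_sep (blockwise_free_flatten beta_free)).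
Qed.
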